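(* Let $\mathsf{X}$ be a finite set of propositional variables. Every property $\|\phi\|_{\mathsf{X}}$ with $\phi$ a $\mathsf{BSML}$-formula over $\mathsf{X}$ is union closed and invariant under $k$-bisimulation for some $k$, but not every state property over $\mathsf{X}$ that is union closed and invariant under $k$-bisimulation for some $k$ is of the form $\|\phi\|_{\mathsf{X}}$ for a $\mathsf{BSML}$-formula $\phi$.
   Context: Formulas of $\mathsf{BSML}$: $\phi ::= p \mid \neg\phi \mid (\phi\wedge\phi) \mid (\phi\vee\phi) \mid \Diamond\phi \mid \mathrm{NE}$. A model over $\mathsf{X}$ is $M=(W,R,V)$, $V:\mathsf{X}\to\wp(W)$; a state is $s\subseteq W$. Support/anti-support: $s\models p$ iff $s\subseteq V(p)$; $s\dashv p$ iff $s\cap V(p)=\emptyset$; $s\models\mathrm{NE}$ iff $s\ne\emptyset$; $s\dashv\mathrm{NE}$ iff $s=\emptyset$; $s\models\neg\phi$ iff $s\dashv\phi$; $s\dashv\neg\phi$ iff $s\models\phi$; $s\models\phi\wedge\psi$ iff both; $s\dashv\phi\wedge\psi$ iff $s=t\cup u$ with $t\dashv\phi$, $u\dashv\psi$; $s\models\phi\vee\psi$ iff $s=t\cup u$ with $t\models\phi$, $u\models\psi$; $s\dashv\phi\vee\psi$ iff $s\dashv\phi$ and $s\dashv\psi$; $s\models\Diamond\phi$ iff each $w\in s$ has a nonempty $t\subseteq R[w]$ with $t\models\phi$; $s\dashv\Diamond\phi$ iff $R[w]\dashv\phi$ for all $w\in s$. A state property over $\mathsf{X}$ is a class of pointed state models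 $(M,s)$; $\|\phi\|_{\mathsf{X}}=\{(M,s):M,s\models\phi\}$. World $k$-bisimilarity: $w\rightleftharpoons_0w'$ iff agreement on $\mathsf{X}$; $w\rightleftharpoons_{k+1}w'$ iff $w\rightleftharpoons_0w'$ and back-and-forth between $R[w],R'[w']$ w.r.t. $\rightleftharpoons_k$. State $k$-bisimilarity: each world of $s$ is $k$-bisimilar to some world of $s'$ and vice versa. Invariance under $k$-bisimulation: $(M,s)\in\mathcal{P}$ and $M,s\rightleftharpoons_kM',s'$ imply $(M',s')\in\mathcal{P}$. Union closed: $(M,s)\in\mathcal{P}$ for all $s$ in nonempty $S$ implies $(M,\bigcup S)\in\mathcal{P}$. *)

From mathcomp Require Import all_boot.
Set Implicit Arguments. Unset Strict Implicit. Unset Printing Implicit Defensive.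

Inductive form (X : Type) : Type :=
| Atom : X -> form X
| Neg  : form X -> form X
| And  : form X -> form X -> form X
| Or   : form X -> form X -> form X
| Dia  : form X -> form X
| NE   : form X.

Record model (X : Type) : Type := Model {
  mW : Type;
  mR : mW -> mW -> Prop;
  mV : X -> mW -> Prop }.
Arguments mW {X} _.
Arguments mR {X} _ _ _.
Arguments mV {X} _ _ _.

Definition state (X : Type) (M : model X) := mW M -> Prop.

Definition is_union (W : Type) (s t u : W -> Prop) : Prop :=
  forall w, s w <-> (t w \/ u w).

(* sem true  phi s  : s supports phi   (M, s |= phi)
   sem false phi s  : s anti-supports phi (M, s =| phi) *)
Fixpoint sem (X : Type) (M : model X) (b : bool) (phi : form X)
  (s : mW M -> Prop) {struct phi} : Prop :=
  match phi with
  | Atom p => if b then forall w, s w -> mV M p w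
              else forall w, s w -> ~ mV M p w
  | NE => if b then exists w, s w else forall w, ~ s w
  | Neg psi => sem (negb b) psi s
  | And a c => if b then sem true a s /\ sem true c s
               else exists t u, is_union s t u /\ sem false a t /\ sem false c u
  | Or a c => if b then exists t u, is_union s t u /\ sem true a t /\ sem true c u
              else sem false a s /\ sem false c s
  | Dia psi => if b then
                 forall w, s w -> exists t : mW M -> Prop,
                   (exists v, t v) /\ (forall v, t v -> mR M w v) /\ sem true psi t
               else forall w, s w -> sem false psi (mR M w)
  end.
Arguments sem {X} M b phi s.

Definition supp (X : Type) (M : model X) (phi : form X) (s : mW M -> Prop) :=
  sem M true phi s.
Arguments supp {X} M phi s.

Definition sprop (X : Type) := forall M : model X, (mW M -> Prop) -> Prop.

Definition prop_of (X : Type) (phi : form X) : sprop X :=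
  fun M s => supp M phi s.

Fixpoint wbisim (X : Type) (M M' : model X) (k : nat) (w : mW M) (w' : mW M')
  {struct k} : Prop :=
  (forall p, mV M p w <-> mV M' p w') /\
  match k with
  | 0 => True
  | k'.+1 =>
      (forall v, mR M w v -> exists v', mR M' w' v' /\ wbisim k' v v') /\
      (forall v', mR M' w' v' -> exists v, mR M w v /\ wbisim k' v v')
  end.
Arguments wbisim {X} M M' k w w'.

Definition sbisim (X : Type) (M M' : model X) (k : nat)
  (s : mW M -> Prop) (s' : mW M' -> Prop) : Prop :=
  (forall w, s w -> exists w', s' w' /\ wbisim M M' k w w') /\
  (forall w', s' w' -> exists w, s w /\ wbisim M M' k w w').

Definition bisim_invariant (X : Type) (k : nat) (P : sprop X) : Prop :=
  forall (M M' : model X) (s : mW M -> Prop) (s' : mW M' -> Prop),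
    P M s -> sbisim k s s' -> P M' s'.

Definition union_closed (X : Type) (P : sprop X) : Prop :=
  forall (M : model X) (S : (mW M -> Prop) -> Prop),
    (exists s, S s) -> (forall s, S s -> P M s) ->
    P M (fun w => exists s, S s /\ s w).
Arguments Atom {X} _.
Arguments Neg {X} _.
Arguments And {X} _ _.
Arguments Or {X} _ _.
Arguments Dia {X} _.
Arguments NE {X}.
Arguments prop_of {X} phi M s.
Arguments sbisim {X} M M' k s s'.
Arguments bisim_invariant {X} k P.
Arguments union_closed {X} P.
Arguments is_union {W} s t u.

(* Support and anti-support of a BSML formula are closed under nonempty unions
   and convex (a state sandwiched between two supporting states supports too),
   by a simultaneous induction; union closure of the split connectives is what
   lets convexity pass through them.  They are also invariant under
   k-bisimulation for k the modal depth.  The property "the state is empty, or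
   contains both a world with a successor and a world without one" is union
   closed and invariant under 1-bisimulation, but not convex: with a looping
   world and a dead end it holds of the empty and of the full state, but not
   of the dead end alone.  It is a modal rather than a propositional property
   because X may be empty. *)

From Stdlib Require Import Classical.
From mathcomp Require Import all_boot.

Section States.
Context {W : Type}.
Implicit Types (s t u : W -> Prop) (A B : (W -> Prop) -> Prop).

Definition substate s t := forall w, s w -> t w.

Definition bigunion (S : (W -> Prop) -> Prop) : W -> Prop :=
  fun w => exists s, S s /\ s w.

Definition closed_under_unions A :=
  forall S, (exists s, S s) -> (forall s, S s -> A s) -> A (bigunion S).

Definition convex A :=
  forall s t u, substate s t -> substate t u -> A s -> A u -> A t.

Definition flat (Q : W -> Prop) s := substate s Q.

Definition tensor A B s := exists t u, is_union s t u /\ A t /\ B u.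

Lemma flat_closed_under_unions Q : closed_under_unions (flat Q).
Proof. by move=> S _ HS w [s [Ss sw]]; apply: HS sw. Qed.

Lemma flat_convex Q : convex (flat Q).
Proof. by move=> s t u _ tu _ Hu w /tu /Hu. Qed.

Lemma tensor_closed_under_unions A B :
  closed_under_unions A -> closed_under_unions B ->
  closed_under_unions (tensor A B).
Proof.
move=> ucA ucB S [s0 Ss0] HS.
pose parts s t u := S s /\ is_union s t u /\ A t /\ B u.
exists (bigunion (fun t => exists s u, parts s t u)).
exists (bigunion (fun u => exists s t, parts s t u)).
have [t0 [u0 [Hs0 [At0 Bu0]]]] := HS s0 Ss0.
split; [move=> w; split | split].
- case=> s [Ss sw]; have [t [u [Hs [At Bu]]]] := HS s Ss.
  case/Hs: sw => [tw | uw].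
    by left; exists t; split=> //; exists s, u.
  by right; exists u; split=> //; exists s, t.
- by case=> -[x [[s [y [Ss [Hs _]]]] xw]]; exists s; split=> //; apply/Hs; auto.
- apply: ucA; first by exists t0, s0, u0.
  by move=> t [s [u [_ [_ []]]]].
- apply: ucB; first by exists u0, s0, t0.
  by move=> u [s [t [_ [_ []]]]].
Qed.

Lemma union2_mem {A s u} :
  closed_under_unions A -> A s -> A u -> A (bigunion (fun x => x = s \/ x = u)).
Proof. by move=> ucA As Au; apply: ucA => [|x [->|->]] //; exists s; left. Qed.

Lemma tensor_convex A B :
  closed_under_unions A -> closed_under_unions B -> convex A -> convex B ->
  convex (tensor A B).
Proof.
move=> ucA ucB cvA cvB s t u st tu [s1 [s2 [Hs [As1 Bs2]]]] [u1 [u2 [Hu [Au1 Bu2]]]].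
exists (fun w => s1 w \/ t w /\ u1 w), (fun w => s2 w \/ t w /\ u2 w).
split; [move=> w; split | split].
- by move=> tw; case/Hu: (tu w tw); auto.
- by case=> [[|[]] | [|[]]] // w_in; apply: st; apply/Hs; auto.
- apply: (cvA _ _ _ _ _ As1 (union2_mem ucA As1 Au1)); first by move=> w; left.
  by move=> w [s1w | [_ u1w]]; [exists s1 | exists u1]; auto.
- apply: (cvB _ _ _ _ _ Bs2 (union2_mem ucB Bs2 Bu2)); first by move=> w; left.
  by move=> w [s2w | [_ u2w]]; [exists s2 | exists u2]; auto.
Qed.

End States.

Section Transfer.
Context {W W' : Type} (E : W -> W' -> Prop).

Definition lift_rel (s : W -> Prop) (s' : W' -> Prop) :=
  (forall w, s w -> exists w', s' w' /\ E w w') /\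
  (forall w', s' w' -> exists w, s w /\ E w w').

Definition transfers (A : (W -> Prop) -> Prop) (A' : (W' -> Prop) -> Prop) :=
  forall s s', lift_rel s s' -> A s -> A' s'.

Definition image_in (s' : W' -> Prop) (t : W -> Prop) : W' -> Prop :=
  fun w' => s' w' /\ exists w, t w /\ E w w'.

Lemma lift_rel_image_in {s s' t} :
  lift_rel s s' -> substate t s -> lift_rel t (image_in s' t).
Proof.
move=> [fwd _] ts; split=> [w tw | w' [_ //]].
by have [w' [s'w' Eww']] := fwd w (ts w tw); exists w'; split; first split; eauto.
Qed.

Lemma flat_transfers (Q : W -> Prop) (Q' : W' -> Prop) :
  (forall w w', E w w' -> Q w -> Q' w') -> transfers (flat Q) (flat Q').
Proof.
by move=> QQ' s s' [_ bwd] Hs w' /bwd [w [sw Eww']]; apply: QQ' Eww' (Hs w sw).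
Qed.

Lemma tensor_transfers A A' B B' :
  transfers A A' -> transfers B B' -> transfers (tensor A B) (tensor A' B').
Proof.
move=> trA trB s s' Hss' [t [u [Hs [At Bu]]]].
exists (image_in s' t), (image_in s' u); split; [move=> w'; split | split].
- move=> s'w'; have [w [sw Eww']] := Hss'.2 w' s'w'.
  by case/Hs: sw => [tw | uw]; [left | right]; split; eauto.
- by case=> -[].
- by apply: trA At; apply: lift_rel_image_in Hss' _ => w tw; apply/Hs; left.
- by apply: trB Bu; apply: lift_rel_image_in Hss' _ => w uw; apply/Hs; right.
Qed.

End Transfer.

Section BSML.
Context {X : Type}.

Fixpoint modal_depth (phi : form X) : nat :=
  match phi with
  | Atom _ | NE => 0
  | Neg psi => modal_depth psi
  | And a c | Or a c => maxn (modal_depth a) (modal_depth c)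
  | Dia psi => (modal_depth psi).+1
  end.

Lemma sem_closed_under_unions (M : model X) (phi : form X) b :
  closed_under_unions (sem M b phi).
Proof.
elim: phi b => [p | psi IH | a IHa c IHc | a IHa c IHc | psi IH |] [] /=;
  try solve [exact: IH | exact: flat_closed_under_unions
            | exact: tensor_closed_under_unions].
- by move=> S neS HS; split; [apply: IHa | apply: IHc] => // s /HS [].
- by move=> S neS HS; split; [apply: IHa | apply: IHc] => // s /HS [].
- by move=> S [s Ss] HS; have [w sw] := HS s Ss; exists w, s.
Qed.

Lemma sem_convex (M : model X) (phi : form X) b : convex (sem M b phi).
Proof.
elim: phi b => [p | psi IH | a IHa c IHc | a IHa c IHc | psi IH |] [] /=;
  try solve [exact: IH | exact: flat_convex
            | apply: tensor_convex => //; exact: sem_closed_under_unions].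
- by move=> s t u st tu [] ? ? [] ? ?; split; [apply: IHa st tu _ _ | apply: IHc st tu _ _].
- by move=> s t u st tu [] ? ? [] ? ?; split; [apply: IHa st tu _ _ | apply: IHc st tu _ _].
- by move=> s t u st _ [w /st tw] _; exists w.
Qed.

Section Bisimulation.
Variables M M' : model X.

Lemma wbisim_val k w w' :
  wbisim M M' k w w' -> forall p, mV M p w <-> mV M' p w'.
Proof. by case: k => [|k] []. Qed.

Lemma wbisim_succ_lift k w w' :
  wbisim M M' k.+1 w w' -> lift_rel (wbisim M M' k) (mR M w) (mR M' w').
Proof. by case. Qed.

Lemma sem_transfers (phi : form X) k b : modal_depth phi <= k ->
  transfers (wbisim M M' k) (sem M b phi) (sem M' b phi).
Proof.
elim: phi k b => [p | psi IH | a IHa c IHc | a IHa c IHc | psi IH |] k b /=.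
- move=> _; case: b; apply: flat_transfers => w w' /wbisim_val Hww'.
    by move/(Hww' p).
  by move=> Hp /(Hww' p).
- exact: IH.
- rewrite geq_max => /andP [ka kc]; case: b.
    by move=> s s' Hss' [As Cs]; split; [apply: IHa Hss' As | apply: IHc Hss' Cs].
  exact: tensor_transfers (IHa _ _ ka) (IHc _ _ kc).
- rewrite geq_max => /andP [ka kc]; case: b.
    exact: tensor_transfers (IHa _ _ ka) (IHc _ _ kc).
  by move=> s s' Hss' [As Cs]; split; [apply: IHa Hss' As | apply: IHc Hss' Cs].
- case: k => // k; rewrite ltnS => kpsi; case: b; apply: flat_transfers.
    move=> w w' /wbisim_succ_lift Hww' [t [[v tv] [tR Ht]]].
    have Htt' := lift_rel_image_in _ Hww' tR.
    exists (image_in (wbisim M M' k) (mR M' w') t); split; last split.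
    + by have [v' [] *] := Htt'.1 v tv; exists v'.
    + by move=> v' [].
    + exact: IH Htt' Ht.
  by move=> w w' /wbisim_succ_lift; apply: IH kpsi _ _.
- move=> _; case: b => s s' [fwd bwd] Hs.
    by have [w /fwd [w' []]] := Hs; exists w'.
  by move=> w' /bwd [w [sw _]]; apply: Hs sw.
Qed.

End Bisimulation.

End BSML.

Section Counterexample.
Context {X : Type}.

Definition empty_or_mixed : sprop X := fun M s =>
  (forall w, ~ s w) \/
  ((exists w, s w /\ exists v, mR M w v) /\
   (exists w, s w /\ forall v, ~ mR M w v)).

Lemma empty_or_mixed_union_closed : union_closed empty_or_mixed.
Proof.
move=> M S _ HS; have [[w [s [Ss sw]]] | empty] := classic (exists w, bigunion S w).
  case: (HS s Ss) => [/(_ w sw) // | [[a [sa Ra]] [d [sd Rd]]]].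
  by right; split; [exists a | exists d]; split=> //; exists s.
by left=> w Sw; apply: empty; exists w.
Qed.

Lemma empty_or_mixed_bisim_invariant : bisim_invariant 1 empty_or_mixed.
Proof.
move=> M M' s s' [empty | [[a [sa [v Rav]]] [d [sd Rd]]]] [fwd bwd].
  by left=> w' /bwd [w [/empty]].
right; split.
  have [a' [sa' [_ [fwd_a _]]]] := fwd a sa.
  by have [v' [Ra'v' _]] := fwd_a v Rav; exists a'; split=> //; exists v'.
have [d' [sd' [_ [_ bwd_d]]]] := fwd d sd.
by exists d'; split=> // u' /bwd_d [u [/Rd]].
Qed.

Definition loop_and_dead_end : model X :=
  Model (fun (w _ : bool) => w = true) (fun _ _ => False).

Lemma empty_or_mixed_not_convex : ~ convex (empty_or_mixed loop_and_dead_end).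
Proof.
move=> cv; have : empty_or_mixed loop_and_dead_end (eq false).
  apply: (cv (fun _ => False) _ (fun _ => True)) => //.
    by apply: or_introl => _ [].
  by right; split; [exists true; split=> //; exists true | exists false].
by case=> [/(_ false erefl) | [[w [<- [v]]]]].
Qed.

End Counterexample.

Theorem fact3p19 (X : finType) :
  (forall phi : form X,
      union_closed (prop_of phi) /\ exists k, bisim_invariant k (prop_of phi)) /\
  ~ (forall P : sprop X,
      union_closed P -> (exists k, bisim_invariant k P) ->
      exists phi : form X, forall (M : model X) (s : mW M -> Prop),
        P M s <-> prop_of phi M s).
Proof.
split=> [phi | expressible].
  split=> [M | ]; first exact: sem_closed_under_unions.
  exists (modal_depth phi) => M M' s s' Hs Hss'.
  exact: sem_transfers (leqnn _) _ _ Hss' Hs.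
have [phi Hphi] := expressible _ empty_or_mixed_union_closed
  (ex_intro _ 1 empty_or_mixed_bisim_invariant).
apply: (@empty_or_mixed_not_convex X) => s t u st tu /Hphi Hs /Hphi Hu.
by apply/Hphi; apply: sem_convex st tu Hs Hu.
Qed.
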